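(* Let $(X,I,S)$ and $(Y,J,T)$ be relative monads in a 2-category $\mathcal{K}$. Then liftings to relative right modules $(F,F_0,\tilde F,\tilde\phi)$ from $(X,I,S)$ to $(Y,J,T)$ are in bijection with relative monad morphisms $(F,F_0,\phi)\colon(X,I,S)\to(Y,J,T)$. The bijection sends a lifting to $(F,F_0,\phi)$ with $\phi$ the component of $J^*_{X_0}\tilde\phi$ at $1_Y$; conversely a relative monad morphism $(F,F_0,\phi)$ gives the lifting with $\tilde F(M,(-)_m)=(MF_0,\,f\mapsto(\phi B\cdot Ff)_m)$, $\tilde F(g)=gF_0$, and $\tilde\phi$ having component $M\phi\colon MFS\Rightarrow MTF_0$ at $M\colon Y\to K$.
   Context: Conventions: 1-cells compose by juxtaposition; vertical composition of 2-cells is written $\cdot$; whiskering by juxtaposition. Relative monad: a relative monad $(X,I,S)$ in $\mathcal{K}$ consists of objects $X_0,X$, 1-cells $I,S\colon X_0\to X$, an operator $(-)^\dagger=(-)^\dagger_S\colon[I,S]\to[S,S]$ (extension: for every span $A,B\colon O\to X_0$ a function sending 2-cells $IA\Rightarrow SB$ to 2-cells $SA\Rightarrow SB$, natural in $O$, $A$ and $B$) and a 2-cell $s\colon I\Rightarrow S$ (unit) such that $k^\dagger\cdot sA=k$, $(sA)^\dagger=1_{SA}$, $(l^\dagger\cdot k)^\dagger=l^\dagger\cdot k^\dagger$ for all $k\colon IA\Rightarrow SB$, $l\colon IB\Rightarrow SC$. Relative monad morphism: $(F,F_0,\phi)\colon(X,I,S)\to(Y,J,T)$ (with $I\colon X_0\to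 X$, $J\colon Y_0\to Y$, units $s,t$) consists of 1-cells $F\colon X\to Y$, $F_0\colon X_0\to Y_0$ with $FI=JF_0$ and a 2-cell $\phi\colon FS\Rightarrow TF_0$ such that $\phi\cdot Fs=tF_0$ and, for all $A,B\colon O\to X_0$ and $k\colon IA\Rightarrow SB$, $\phi B\cdot F(k^\dagger_S)=(\phi B\cdot Fk)^\dagger_T\cdot\phi A$. Relative right modules: for a relative monad $(X,I,T)$ (unit $t$, extension $(-)^\dagger$) and object $K$, a $K$-indexed relative right $T$-module is a 1-cell $M\colon X_0\to K$ with an operator $(-)_m\colon[I,T]\to[M,M]$ (so $h\colon IA\Rightarrow TB$ gives $h_m\colon MA\Rightarrow MB$, naturally in $O,A,B$) such that $(tA)_m=1_{MA}$ and $(k^\dagger\cdot h)_m=k_m\cdot h_m$ for all $h\colon IA\Rightarrow TB$, $k\colon IB\Rightarrow TC$. A morphism $(M,(-)_m)\to(N,(-)_n)$ is a 2-cell $g\colon M\Rightarrow N$ with $gB\cdot h_m=h_n\cdot gA$. These form a category $\mathrm{Mod}_T(K)$ and a 2-functor $\mathrm{Mod}_T(-)\colon\mathcal{K}\to\mathbf{Cat}$ acting by postcomposition. $J^*_{X_0}\colon\mathrm{Mod}_T(-)\to\mathcal{K}(X_0,-)$ is the forgetful 2-natural transformation; $U^*_X\colon\mathcal{K}(X,-)\to\mathrm{Mod}_T(-)$ sends $M\colon X\to K$ to $(MT,M(-)^\dagger)$; the modification $t\colon(-\circ I)\Rightarrow J^*_{X_0}U^*_X$ has components $Mt\colon MI\Rightarrow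 MT$. The same notation is used for any relative monad. Lifting to relative right modules: for relative monads $(X,I,S)$ ($I\colon X_0\to X$, unit $s$) and $(Y,J,T)$ ($J\colon Y_0\to Y$, unit $t$), a lifting to relative right modules from $(X,I,S)$ to $(Y,J,T)$ is a tuple $(F,F_0,\tilde F,\tilde\phi)$: 1-cells $F\colon X\to Y$, $F_0\colon X_0\to Y_0$ with $FI=JF_0$; a 2-natural transformation $\tilde F\colon\mathrm{Mod}_T(-)\to\mathrm{Mod}_S(-)$ with $J^*_{X_0}\tilde F=(-\circ F_0)J^*_{Y_0}$, so that $\tilde F(M,(-)_m)=(MF_0,(-)_{\tilde Fm})$; and a modification $\tilde\phi\colon U^*_X\circ(-\circ F)\Rightarrow\tilde F\circ U^*_Y$ between 2-natural transformations $\mathcal{K}(Y,-)\to\mathrm{Mod}_S(-)$; such that (1) for every $M\colon Y\to K$, $(J^*_{X_0}\tilde\phi)_M\cdot MFs=MtF_0$ as 2-cells $MJF_0=MFI\Rightarrow MTF_0$; (2) for every $(M,(-)_m)\in\mathrm{Mod}_T(K)$, all $A,B\colon O\to X_0$ and $f\colon IA\Rightarrow SB$, $f_{\tilde Fm}=(f_{\tilde FT}\cdot tF_0A)_m$, where $(-)_{\tilde FT}$ is the operator of $\tilde F(U^*_Y(1_Y))=\tilde F(T,(-)^\dagger_T)$. *)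

(* Conventions: [comp1 g f] is the composite "g f" (f first, then g);
   [vcomp b a] is "b . a"; [lwhisk h a] is "h a"; [rwhisk a h] is "a h". *)

Definition cast2 {A : Type} (P : A -> A -> Type) {x x' y y' : A}
  (ex : x = x') (ey : y = y') (c : P x y) : P x' y' :=
  match ex in _ = x1 return P x1 y' with
  | eq_refl => match ey in _ = y1 return P x y1 with eq_refl => c end
  end.
Arguments cast2 {A} P {x x' y y'} ex ey c.

Record TwoCat := {
  Obj :> Type;
  Hom : Obj -> Obj -> Type;
  Cell : forall a b : Obj, Hom a b -> Hom a b -> Type;
  id1 : forall a, Hom a a;
  comp1 : forall a b c, Hom b c -> Hom a b -> Hom a c;
  id2 : forall a b (f : Hom a b), Cell _ _ f f;
  vcomp : forall a b (f g h : Hom a b), Cell _ _ g h -> Cell _ _ f g -> Cell _ _ f h;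
  lwhisk : forall a b c (h : Hom b c) (f g : Hom a b),
      Cell _ _ f g -> Cell _ _ (comp1 _ _ _ h f) (comp1 _ _ _ h g);
  rwhisk : forall a b c (f g : Hom b c), Cell _ _ f g ->
      forall h : Hom a b, Cell _ _ (comp1 _ _ _ f h) (comp1 _ _ _ g h);
  comp1A : forall a b c d (h : Hom c d) (g : Hom b c) (f : Hom a b),
      comp1 _ _ _ h (comp1 _ _ _ g f) = comp1 _ _ _ (comp1 _ _ _ h g) f;
  comp1_idl : forall a b (f : Hom a b), comp1 _ _ _ (id1 b) f = f;
  comp1_idr : forall a b (f : Hom a b), comp1 _ _ _ f (id1 a) = f;
  vcompA : forall a b (f g h k : Hom a b) (x : Cell _ _ h k) (y : Cell _ _ g h)
      (z : Cell _ _ f g), vcomp _ _ _ _ _ x (vcomp _ _ _ _ _ y z)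
                          = vcomp _ _ _ _ _ (vcomp _ _ _ _ _ x y) z;
  vcomp_idl : forall a b (f g : Hom a b) (x : Cell _ _ f g),
      vcomp _ _ _ _ _ (id2 _ _ g) x = x;
  vcomp_idr : forall a b (f g : Hom a b) (x : Cell _ _ f g),
      vcomp _ _ _ _ _ x (id2 _ _ f) = x;
  lwhisk_id2 : forall a b c (h : Hom b c) (f : Hom a b),
      lwhisk _ _ _ h _ _ (id2 _ _ f) = id2 _ _ (comp1 _ _ _ h f);
  lwhisk_vcomp : forall a b c (h : Hom b c) (f g k : Hom a b)
      (x : Cell _ _ g k) (y : Cell _ _ f g),
      lwhisk _ _ _ h _ _ (vcomp _ _ _ _ _ x y)
      = vcomp _ _ _ _ _ (lwhisk _ _ _ h _ _ x) (lwhisk _ _ _ h _ _ y);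
  rwhisk_id2 : forall a b c (f : Hom b c) (h : Hom a b),
      rwhisk _ _ _ _ _ (id2 _ _ f) h = id2 _ _ (comp1 _ _ _ f h);
  rwhisk_vcomp : forall a b c (f g k : Hom b c) (x : Cell _ _ g k)
      (y : Cell _ _ f g) (h : Hom a b),
      rwhisk _ _ _ _ _ (vcomp _ _ _ _ _ x y) h
      = vcomp _ _ _ _ _ (rwhisk _ _ _ _ _ x h) (rwhisk _ _ _ _ _ y h);
  interchange : forall a b c (f g : Hom a b) (h k : Hom b c)
      (x : Cell _ _ f g) (y : Cell _ _ h k),
      vcomp _ _ _ _ _ (lwhisk _ _ _ k _ _ x) (rwhisk _ _ _ _ _ y f)
      = vcomp _ _ _ _ _ (rwhisk _ _ _ _ _ y g) (lwhisk _ _ _ h _ _ x);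
  lwhisk_id1 : forall a b (f g : Hom a b) (x : Cell _ _ f g),
      lwhisk _ _ _ (id1 b) _ _ x
      = cast2 (Cell a b) (eq_sym (comp1_idl _ _ f)) (eq_sym (comp1_idl _ _ g)) x;
  lwhisk_comp1 : forall a b c d (k : Hom c d) (h : Hom b c) (f g : Hom a b)
      (x : Cell _ _ f g),
      lwhisk _ _ _ (comp1 _ _ _ k h) _ _ x
      = cast2 (Cell a d) (comp1A _ _ _ _ k h f) (comp1A _ _ _ _ k h g)
          (lwhisk _ _ _ k _ _ (lwhisk _ _ _ h _ _ x));
  rwhisk_id1 : forall a b (f g : Hom a b) (x : Cell _ _ f g),
      rwhisk _ _ _ _ _ x (id1 a)
      = cast2 (Cell a b) (eq_sym (comp1_idr _ _ f)) (eq_sym (comp1_idr _ _ g)) x;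
  rwhisk_comp1 : forall a b c d (f g : Hom c d) (x : Cell _ _ f g)
      (h : Hom b c) (k : Hom a b),
      rwhisk _ _ _ _ _ x (comp1 _ _ _ h k)
      = cast2 (Cell a d) (eq_sym (comp1A _ _ _ _ f h k)) (eq_sym (comp1A _ _ _ _ g h k))
          (rwhisk _ _ _ _ _ (rwhisk _ _ _ _ _ x h) k);
  lrwhisk : forall a b c d (h : Hom c d) (f g : Hom b c) (x : Cell _ _ f g)
      (k : Hom a b),
      lwhisk _ _ _ h _ _ (rwhisk _ _ _ _ _ x k)
      = cast2 (Cell a d) (eq_sym (comp1A _ _ _ _ h f k)) (eq_sym (comp1A _ _ _ _ h g k))
          (rwhisk _ _ _ _ _ (lwhisk _ _ _ h _ _ x) k)
}.

Arguments Hom {_} _ _.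
Arguments Cell {_ _ _} _ _.
Arguments id1 {_} _.
Arguments comp1 {_ _ _ _} _ _.
Arguments id2 {_ _ _} _.
Arguments vcomp {_ _ _ _ _ _} _ _.
Arguments lwhisk {_ _ _ _} _ {_ _} _.
Arguments rwhisk {_ _ _ _ _ _} _ _.
Arguments comp1A {_ _ _ _ _} _ _ _.
Arguments comp1_idl {_ _ _} _.
Arguments comp1_idr {_ _ _} _.

Definition castc {C : TwoCat} {a b : C} {f f' g g' : Hom a b}
  (ef : f = f') (eg : g = g') (x : Cell f g) : Cell f' g' :=
  cast2 (@Cell C a b) ef eg x.

Lemma assoc4 {C : TwoCat} {a b c d k : C} (L : Hom d k) (M : Hom c d)
  (F : Hom b c) (A : Hom a b) :
  comp1 L (comp1 (comp1 M F) A) = comp1 (comp1 (comp1 L M) F) A.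
Proof. rewrite (comp1A L (comp1 M F) A), (comp1A L M F). reflexivity. Qed.

Lemma eq_MJF0 {C : TwoCat} {X0 X Y0 Y K : C} (I : Hom X0 X) (J : Hom Y0 Y)
  (F : Hom X Y) (F0 : Hom X0 Y0) (M : Hom Y K) :
  comp1 F I = comp1 J F0 -> comp1 (comp1 M J) F0 = comp1 (comp1 M F) I.
Proof.
  intro H. rewrite <- (comp1A M J F0), <- (comp1A M F I), H. reflexivity.
Qed.

Lemma eq_FIA {C : TwoCat} {O X0 X Y0 Y : C} (I : Hom X0 X) (J : Hom Y0 Y)
  (F : Hom X Y) (F0 : Hom X0 Y0) (A : Hom O X0) :
  comp1 F I = comp1 J F0 -> comp1 F (comp1 I A) = comp1 J (comp1 F0 A).
Proof.
  intro H. rewrite (comp1A F I A), H, <- (comp1A J F0 A). reflexivity.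
Qed.

Lemma eq_idTF0A {C : TwoCat} {O X0 Y0 Y : C} (T : Hom Y0 Y) (F0 : Hom X0 Y0)
  (A : Hom O X0) :
  comp1 (comp1 (comp1 (id1 Y) T) F0) A = comp1 T (comp1 F0 A).
Proof. rewrite (comp1_idl T), (comp1A T F0 A). reflexivity. Qed.

Lemma eq_idFS {C : TwoCat} {X0 X Y : C} (F : Hom X Y) (S : Hom X0 X) :
  comp1 (comp1 (id1 Y) F) S = comp1 F S.
Proof. rewrite (comp1_idl F). reflexivity. Qed.

(* Operators [I,S] -> [P,Q]: for every span A,B : O -> X0, a function from
   2-cells I A => S B to 2-cells P A => Q B.                                  *)

Definition Op {C : TwoCat} {X0 X Z : C} (I S : Hom X0 X) (P Q : Hom X0 Z) :=
  forall (O : C) (A B : Hom O X0),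
    Cell (comp1 I A) (comp1 S B) -> Cell (comp1 P A) (comp1 Q B).

Definition op_natural {C : TwoCat} {X0 X Z : C} {I S : Hom X0 X}
  {P Q : Hom X0 Z} (op : Op I S P Q) : Prop :=
  (forall (O O' : C) (W : Hom O' O) (A B : Hom O X0)
          (k : Cell (comp1 I A) (comp1 S B)),
     op O' (comp1 A W) (comp1 B W)
        (castc (eq_sym (comp1A I A W)) (eq_sym (comp1A S B W)) (rwhisk k W))
     = castc (eq_sym (comp1A P A W)) (eq_sym (comp1A Q B W))
             (rwhisk (op O A B k) W)) /\
  (forall (O : C) (A A' B : Hom O X0) (al : Cell A' A)
          (k : Cell (comp1 I A) (comp1 S B)),
     op O A' B (vcomp k (lwhisk I al)) = vcomp (op O A B k) (lwhisk P al)) /\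
  (forall (O : C) (A B B' : Hom O X0) (be : Cell B B')
          (k : Cell (comp1 I A) (comp1 S B)),
     op O A B' (vcomp (lwhisk S be) k) = vcomp (lwhisk Q be) (op O A B k)).

Record RelMonad (C : TwoCat) := MkRelMonad {
  rm_X0 : C;
  rm_X : C;
  rm_I : Hom rm_X0 rm_X;
  rm_S : Hom rm_X0 rm_X;
  rm_ext : Op rm_I rm_S rm_S rm_S;
  rm_unit : Cell rm_I rm_S;
  rm_ext_nat : op_natural rm_ext;
  rm_ext_unit : forall (O : C) (A B : Hom O rm_X0)
      (k : Cell (comp1 rm_I A) (comp1 rm_S B)),
      vcomp (rm_ext O A B k) (rwhisk rm_unit A) = k;
  rm_unit_ext : forall (O : C) (A : Hom O rm_X0),
      rm_ext O A A (rwhisk rm_unit A) = id2 (comp1 rm_S A);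
  rm_ext_comp : forall (O : C) (A B D : Hom O rm_X0)
      (k : Cell (comp1 rm_I A) (comp1 rm_S B))
      (l : Cell (comp1 rm_I B) (comp1 rm_S D)),
      rm_ext O A D (vcomp (rm_ext O B D l) k)
      = vcomp (rm_ext O B D l) (rm_ext O A B k)
}.
Arguments rm_X0 {C} _.
Arguments rm_X {C} _.
Arguments rm_I {C} _.
Arguments rm_S {C} _.
Arguments rm_ext {C} _ _ _ _ _.
Arguments rm_unit {C} _.

Definition is_rmod {C : TwoCat} (T : RelMonad C) {K : C}
  (M : Hom (rm_X0 T) K) (op : Op (rm_I T) (rm_S T) M M) : Prop :=
  op_natural op /\
  (forall (O : C) (A : Hom O (rm_X0 T)),
     op O A A (rwhisk (rm_unit T) A) = id2 (comp1 M A)) /\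
  (forall (O : C) (A B D : Hom O (rm_X0 T))
          (h : Cell (comp1 (rm_I T) A) (comp1 (rm_S T) B))
          (k : Cell (comp1 (rm_I T) B) (comp1 (rm_S T) D)),
     op O A D (vcomp (rm_ext T O B D k) h) = vcomp (op O B D k) (op O A B h)).

Record RMod {C : TwoCat} (T : RelMonad C) (K : C) := MkRMod {
  md_car : Hom (rm_X0 T) K;
  md_op : Op (rm_I T) (rm_S T) md_car md_car;
  md_ax : is_rmod T md_car md_op
}.
Arguments MkRMod {C} T {K} md_car md_op md_ax.
Arguments md_car {C T K} _.
Arguments md_op {C T K} _.

Definition is_modmor {C : TwoCat} (T : RelMonad C) {K : C}
  {M N : Hom (rm_X0 T) K} (m : Op (rm_I T) (rm_S T) M M)
  (n : Op (rm_I T) (rm_S T) N N) (g : Cell M N) : Prop :=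
  forall (O : C) (A B : Hom O (rm_X0 T))
         (h : Cell (comp1 (rm_I T) A) (comp1 (rm_S T) B)),
    vcomp (rwhisk g B) (m O A B h) = vcomp (n O A B h) (rwhisk g A).

Definition post_op {C : TwoCat} (T : RelMonad C) {K K' : C} (L : Hom K K')
  (M : Hom (rm_X0 T) K) (op : Op (rm_I T) (rm_S T) M M) :
  Op (rm_I T) (rm_S T) (comp1 L M) (comp1 L M) :=
  fun O A B h => castc (comp1A L M A) (comp1A L M B) (lwhisk L (op O A B h)).

Definition U_op {C : TwoCat} (T : RelMonad C) {K : C} (M : Hom (rm_X T) K) :
  Op (rm_I T) (rm_S T) (comp1 M (rm_S T)) (comp1 M (rm_S T)) :=
  fun O A B k => castc (comp1A M (rm_S T) A) (comp1A M (rm_S T) B)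
                       (lwhisk M (rm_ext T O A B k)).

(* data: Ftilde (on objects of Mod_T(K); on morphisms it is forced to be
   g |-> g F0 by J^* Ftilde = (- o F0) J^* ), and the components of phitilde *)
Record LiftData {C : TwoCat} (S T : RelMonad C) (F : Hom (rm_X S) (rm_X T))
  (F0 : Hom (rm_X0 S) (rm_X0 T)) := MkLiftData {
  lift_Ft : forall (K : C) (m : RMod T K),
      Op (rm_I S) (rm_S S) (comp1 (md_car m) F0) (comp1 (md_car m) F0);
  lift_phi : forall (K : C) (M : Hom (rm_X T) K),
      Cell (comp1 (comp1 M F) (rm_S S)) (comp1 (comp1 M (rm_S T)) F0)
}.
Arguments MkLiftData {C S T F F0} lift_Ft lift_phi.
Arguments lift_Ft {C S T F F0} _ {K} m.
Arguments lift_phi {C S T F F0} _ {K} M.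

Definition is_lifting {C : TwoCat} {S T : RelMonad C}
  {F : Hom (rm_X S) (rm_X T)} {F0 : Hom (rm_X0 S) (rm_X0 T)}
  (e : comp1 F (rm_I S) = comp1 (rm_I T) F0) (d : LiftData S T F F0) : Prop :=
  (forall (K : C) (m : RMod T K), is_rmod S (comp1 (md_car m) F0) (lift_Ft d m)) /\
  (forall (K : C) (m n : RMod T K) (g : Cell (md_car m) (md_car n)),
     is_modmor T (md_op m) (md_op n) g ->
     is_modmor S (lift_Ft d m) (lift_Ft d n) (rwhisk g F0)) /\
  (forall (K K' : C) (L : Hom K K') (m : RMod T K)
          (pf : is_rmod T (comp1 L (md_car m)) (post_op T L (md_car m) (md_op m)))
          (O : C) (A B : Hom O (rm_X0 S))
          (f : Cell (comp1 (rm_I S) A) (comp1 (rm_S S) B)),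
     lift_Ft d (MkRMod T (comp1 L (md_car m)) (post_op T L (md_car m) (md_op m)) pf)
             O A B f
     = castc (assoc4 L (md_car m) F0 A) (assoc4 L (md_car m) F0 B)
             (lwhisk L (lift_Ft d m O A B f))) /\
  (forall (K : C) (M : Hom (rm_X T) K)
          (pf : is_rmod T (comp1 M (rm_S T)) (U_op T M)),
     is_modmor S (U_op S (comp1 M F))
               (lift_Ft d (MkRMod T (comp1 M (rm_S T)) (U_op T M) pf))
               (lift_phi d M)) /\
  (forall (K : C) (M M' : Hom (rm_X T) K) (mu : Cell M M'),
     vcomp (lift_phi d M') (rwhisk (rwhisk mu F) (rm_S S))
     = vcomp (rwhisk (rwhisk mu (rm_S T)) F0) (lift_phi d M)) /\
  (forall (K K' : C) (L : Hom K K') (M : Hom (rm_X T) K),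
     lift_phi d (comp1 L M)
     = castc (assoc4 L M F (rm_S S)) (assoc4 L M (rm_S T) F0)
             (lwhisk L (lift_phi d M))) /\
  (forall (K : C) (M : Hom (rm_X T) K),
     vcomp (lift_phi d M) (lwhisk (comp1 M F) (rm_unit S))
     = castc (eq_MJF0 (rm_I S) (rm_I T) F F0 M e) eq_refl (rwhisk (lwhisk M (rm_unit T)) F0)) /\
  (forall (K : C) (m : RMod T K)
          (pf : is_rmod T (comp1 (id1 (rm_X T)) (rm_S T)) (U_op T (id1 (rm_X T))))
          (O : C) (A B : Hom O (rm_X0 S))
          (f : Cell (comp1 (rm_I S) A) (comp1 (rm_S S) B)),
     lift_Ft d m O A B f
     = castc (comp1A (md_car m) F0 A) (comp1A (md_car m) F0 B)
         (md_op m O (comp1 F0 A) (comp1 F0 B)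
            (vcomp (castc (eq_idTF0A (rm_S T) F0 A) (eq_idTF0A (rm_S T) F0 B)
                      (lift_Ft d (MkRMod T (comp1 (id1 (rm_X T)) (rm_S T))
                                          (U_op T (id1 (rm_X T))) pf) O A B f))
                   (rwhisk (rm_unit T) (comp1 F0 A))))).

Definition Lifting {C : TwoCat} {S T : RelMonad C}
  {F : Hom (rm_X S) (rm_X T)} {F0 : Hom (rm_X0 S) (rm_X0 T)}
  (e : comp1 F (rm_I S) = comp1 (rm_I T) F0) :=
  { d : LiftData S T F F0 | is_lifting e d }.

Definition transfer {C : TwoCat} {S T : RelMonad C}
  {F : Hom (rm_X S) (rm_X T)} {F0 : Hom (rm_X0 S) (rm_X0 T)}
  (e : comp1 F (rm_I S) = comp1 (rm_I T) F0)
  (phi : Cell (comp1 F (rm_S S)) (comp1 (rm_S T) F0))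
  (O : C) (A B : Hom O (rm_X0 S))
  (k : Cell (comp1 (rm_I S) A) (comp1 (rm_S S) B)) :
  Cell (comp1 (rm_I T) (comp1 F0 A)) (comp1 (rm_S T) (comp1 F0 B)) :=
  castc eq_refl (eq_sym (comp1A (rm_S T) F0 B))
    (vcomp (rwhisk phi B)
           (castc (eq_FIA (rm_I S) (rm_I T) F F0 A e) (comp1A F (rm_S S) B)
                  (lwhisk F k))).

Definition is_rmon_mor {C : TwoCat} {S T : RelMonad C}
  {F : Hom (rm_X S) (rm_X T)} {F0 : Hom (rm_X0 S) (rm_X0 T)}
  (e : comp1 F (rm_I S) = comp1 (rm_I T) F0)
  (phi : Cell (comp1 F (rm_S S)) (comp1 (rm_S T) F0)) : Prop :=
  vcomp phi (castc e eq_refl (lwhisk F (rm_unit S))) = rwhisk (rm_unit T) F0 /\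
  (forall (O : C) (A B : Hom O (rm_X0 S))
          (k : Cell (comp1 (rm_I S) A) (comp1 (rm_S S) B)),
     vcomp (rwhisk phi B)
           (castc (comp1A F (rm_S S) A) (comp1A F (rm_S S) B)
                  (lwhisk F (rm_ext S O A B k)))
     = vcomp (castc (comp1A (rm_S T) F0 A) (comp1A (rm_S T) F0 B)
                    (rm_ext T O (comp1 F0 A) (comp1 F0 B) (transfer e phi O A B k)))
             (rwhisk phi A)).

Definition RMonMor {C : TwoCat} {S T : RelMonad C}
  {F : Hom (rm_X S) (rm_X T)} {F0 : Hom (rm_X0 S) (rm_X0 T)}
  (e : comp1 F (rm_I S) = comp1 (rm_I T) F0) :=
  { phi : Cell (comp1 F (rm_S S)) (comp1 (rm_S T) F0) | is_rmon_mor e phi }.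

Definition lifting_to_phi {C : TwoCat} {S T : RelMonad C}
  {F : Hom (rm_X S) (rm_X T)} {F0 : Hom (rm_X0 S) (rm_X0 T)}
  (d : LiftData S T F F0) : Cell (comp1 F (rm_S S)) (comp1 (rm_S T) F0) :=
  castc (eq_idFS F (rm_S S)) (eq_idFS (rm_S T) F0) (lift_phi d (id1 (rm_X T))).

Definition phi_to_lifting {C : TwoCat} {S T : RelMonad C}
  {F : Hom (rm_X S) (rm_X T)} {F0 : Hom (rm_X0 S) (rm_X0 T)}
  (e : comp1 F (rm_I S) = comp1 (rm_I T) F0)
  (phi : Cell (comp1 F (rm_S S)) (comp1 (rm_S T) F0)) : LiftData S T F F0 :=
  MkLiftData
    (fun K m O A B f =>
       castc (comp1A (md_car m) F0 A) (comp1A (md_car m) F0 B)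
             (md_op m O (comp1 F0 A) (comp1 F0 B) (transfer e phi O A B f)))
    (fun K M => castc (comp1A M F (rm_S S)) (comp1A M (rm_S T) F0) (lwhisk M phi)).

(* A lifting (F, F0, Ft, phit) is determined by the single 2-cell
   phi := phit at 1_Y : F S => T F0.  Indeed, condition (2) expresses the
   operator of Ft(M,(-)_m) through the operator of Ft(T,(-)^dagger), and the
   facts that phit_{1_Y} is a morphism of S-modules and satisfies condition (1)
   force  Ft(T,(-)^dagger)(f) = (phi B . F f)^dagger; the modification axiom
   gives phit_M = M phi.  Conversely every relative monad morphism phi yields a
   lifting by the formulas of the statement, each lifting axiom being a short
   consequence of the two morphism axioms, the module laws and the 2-category
   laws. *)

From Stdlib Require Import ProofIrrelevance ClassicalEpsilon FunctionalExtensionality.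

Lemma castc_id {C : TwoCat} {a b : C} {f g : Hom a b} (e1 : f = f) (e2 : g = g)
  (x : Cell f g) : castc e1 e2 x = x.
Proof.
  rewrite (proof_irrelevance _ e1 eq_refl), (proof_irrelevance _ e2 eq_refl).
  reflexivity.
Qed.

(* Packed 2-cells between 1-cells a -> b: a 2-cell with its source and target,
   or [None] for the result of an ill-typed operation. *)
Definition Cell2 {C : TwoCat} (a b : C) :=
  {p : Hom a b * Hom a b & Cell (fst p) (snd p)}.
Definition PCell {C : TwoCat} (a b : C) := option (Cell2 a b).

Definition pack {C : TwoCat} {a b : C} {f g : Hom a b} (x : Cell f g) : PCell a b :=
  Some (existT (fun p : Hom a b * Hom a b => Cell (fst p) (snd p)) (f, g) x).

Definition unpack {C : TwoCat} {a b : C} (f g : Hom a b) (p : PCell a b)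
  : option (Cell f g) :=
  match p with
  | Some (existT _ (f', g') x) =>
    match excluded_middle_informative (f' = f),
          excluded_middle_informative (g' = g) with
    | left e1, left e2 => Some (castc e1 e2 x)
    | _, _ => None end
  | None => None end.

Definition pvcomp {C : TwoCat} {a b : C} (p q : PCell a b) : PCell a b :=
  match p, q with
  | Some (existT _ (g, h) x), Some (existT _ (f, _) _) =>
    match unpack f g q with Some y => pack (vcomp x y) | None => None end
  | _, _ => None end.

Definition plwhisk {C : TwoCat} {a b c : C} (h : Hom b c) (p : PCell a b)
  : PCell a c :=
  match p with Some (existT _ _ x) => pack (lwhisk h x) | None => None end.
Definition prwhisk {C : TwoCat} {a b c : C} (p : PCell b c) (h : Hom a b)
  : PCell a c :=
  match p with Some (existT _ _ x) => pack (rwhisk x h) | None => None end.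
Definition pid2 {C : TwoCat} {a b : C} (f : Hom a b) : PCell a b := pack (id2 f).
Definition pop {C : TwoCat} {X0 X Z : C} {I S : Hom X0 X} {P Q : Hom X0 Z}
  (op : Op I S P Q) (O : C) (A B : Hom O X0) (p : PCell O X) : PCell O Z :=
  match unpack (comp1 I A) (comp1 S B) p with
  | Some k => pack (op O A B k) | None => None end.

Definition Typed {C : TwoCat} {a b : C} (p : PCell a b) (f g : Hom a b) :=
  exists x : Cell f g, p = pack x.

Lemma unpack_pack {C : TwoCat} {a b : C} {f g : Hom a b} (x : Cell f g) :
  unpack f g (pack x) = Some x.
Proof.
  unfold unpack, pack; simpl.
  destruct (excluded_middle_informative (f = f)) as [e1|n]; [|congruence].
  destruct (excluded_middle_informative (g = g)) as [e2|n]; [|congruence].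
  rewrite castc_id; reflexivity.
Qed.

(* Packing is faithful on 2-cells with fixed endpoints: this is how equalities
   of packed cells are turned back into equalities of 2-cells. *)
Lemma pack_inj {C : TwoCat} {a b : C} {f g : Hom a b} (x y : Cell f g) :
  pack x = pack y -> x = y.
Proof.
  intro H. assert (H' := f_equal (unpack f g) H).
  rewrite !unpack_pack in H'. injection H'; trivial.
Qed.

(* Packing forgets transports, and commutes with every operation. *)
Lemma pack_castc {C : TwoCat} {a b : C} {f f' g g' : Hom a b} (e1 : f = f')
  (e2 : g = g') (x : Cell f g) : pack (castc e1 e2 x) = pack x.
Proof. destruct e1, e2; reflexivity. Qed.
Lemma pack_cast2 {C : TwoCat} {a b : C} {f f' g g' : Hom a b} (e1 : f = f')
  (e2 : g = g') (x : Cell f g) : pack (cast2 (@Cell C a b) e1 e2 x) = pack x.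
Proof. destruct e1, e2; reflexivity. Qed.
Lemma pack_vcomp {C : TwoCat} {a b : C} {f g h : Hom a b} (x : Cell g h)
  (y : Cell f g) : pack (vcomp x y) = pvcomp (pack x) (pack y).
Proof.
  change (pvcomp (pack x) (pack y))
    with (match unpack f g (pack y) with
          | Some y' => pack (vcomp x y') | None => None end).
  rewrite unpack_pack. reflexivity.
Qed.
Lemma pack_lwhisk {C : TwoCat} {a b c : C} (h : Hom b c) {f g : Hom a b}
  (x : Cell f g) : pack (lwhisk h x) = plwhisk h (pack x).
Proof. reflexivity. Qed.
Lemma pack_rwhisk {C : TwoCat} {a b c : C} {f g : Hom b c} (x : Cell f g)
  (h : Hom a b) : pack (rwhisk x h) = prwhisk (pack x) h.
Proof. reflexivity. Qed.
Lemma pack_id2 {C : TwoCat} {a b : C} (f : Hom a b) : pack (id2 f) = pid2 f.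
Proof. reflexivity. Qed.
Lemma pack_op {C : TwoCat} {X0 X Z : C} {I S : Hom X0 X} {P Q : Hom X0 Z}
  (op : Op I S P Q) (O : C) (A B : Hom O X0) (k : Cell (comp1 I A) (comp1 S B)) :
  pack (op O A B k) = pop op O A B (pack k).
Proof. unfold pop. rewrite unpack_pack. reflexivity. Qed.

Lemma typed_pack {C : TwoCat} {a b : C} {f g f' g' : Hom a b} (x : Cell f g) :
  f = f' -> g = g' -> Typed (pack x) f' g'.
Proof. intros e1 e2. exists (castc e1 e2 x). symmetry; apply pack_castc. Qed.
Lemma typed_vcomp {C : TwoCat} {a b : C} {f g h : Hom a b} (p q : PCell a b) :
  Typed p g h -> Typed q f g -> Typed (pvcomp p q) f h.
Proof. intros [x ->] [y ->]. exists (vcomp x y). symmetry; apply pack_vcomp. Qed.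
Lemma typed_lwhisk {C : TwoCat} {a b c : C} (h : Hom b c) {f g : Hom a b}
  {f' g' : Hom a c} (p : PCell a b) :
  Typed p f g -> comp1 h f = f' -> comp1 h g = g' -> Typed (plwhisk h p) f' g'.
Proof. intros [x ->] e1 e2. apply typed_pack; assumption. Qed.
Lemma typed_rwhisk {C : TwoCat} {a b c : C} {f g : Hom b c} (h : Hom a b)
  {f' g' : Hom a c} (p : PCell b c) :
  Typed p f g -> comp1 f h = f' -> comp1 g h = g' -> Typed (prwhisk p h) f' g'.
Proof. intros [x ->] e1 e2. apply typed_pack; assumption. Qed.
Lemma typed_id2 {C : TwoCat} {a b : C} (f f' g' : Hom a b) :
  f = f' -> f = g' -> Typed (pid2 f) f' g'.
Proof. intros. apply typed_pack; assumption. Qed.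
Lemma typed_op {C : TwoCat} {X0 X Z : C} {I S : Hom X0 X} {P Q : Hom X0 Z}
  (op : Op I S P Q) (O : C) (A B : Hom O X0) (f' g' : Hom O Z) (p : PCell O X) :
  Typed p (comp1 I A) (comp1 S B) -> comp1 P A = f' -> comp1 Q B = g' ->
  Typed (pop op O A B p) f' g'.
Proof. intros [x ->] e1 e2. rewrite <- pack_op. apply typed_pack; assumption. Qed.
Lemma typed_conv {C : TwoCat} {a b : C} {f g f' g' : Hom a b} (p : PCell a b) :
  Typed p f g -> f = f' -> g = g' -> Typed p f' g'.
Proof. intros H -> ->; exact H. Qed.

Ltac hom_eq :=
  solve [ reflexivity
        | repeat rewrite ?comp1_idl, ?comp1_idr, <- ?comp1A; reflexivity
        | repeat rewrite ?comp1_idl, ?comp1_idr, <- ?comp1A;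
          match goal with E : comp1 ?F ?I = comp1 ?J ?F0 |- _ =>
            repeat rewrite ?E, ?(eq_FIA I J F F0 _ E); reflexivity end ].

Ltac typed := match goal with
 | |- Typed (pack _) _ _ => apply typed_pack; hom_eq
 | |- Typed (pvcomp _ _) _ _ => eapply typed_vcomp; [typed|typed]
 | |- Typed (plwhisk _ _) _ _ => eapply typed_lwhisk; [typed|hom_eq|hom_eq]
 | |- Typed (prwhisk _ _) _ _ => eapply typed_rwhisk; [typed|hom_eq|hom_eq]
 | |- Typed (pid2 _) _ _ => apply typed_id2; hom_eq
 | |- Typed (pop _ _ _ _ _) _ _ => eapply typed_op; [typed|hom_eq|hom_eq]
 | |- Typed ?p _ _ => is_var p; eapply typed_conv; [eassumption|hom_eq|hom_eq]
 end.

Ltac unpack_typed H := let x := fresh "x" in destruct H as [x ->].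

Lemma pcell_cases {C : TwoCat} {a b : C} (p : PCell a b) :
  p = None \/ exists (f g : Hom a b) (x : Cell f g), p = pack x.
Proof. destruct p as [[[f g] x]|]; [right; exists f, g, x|left]; reflexivity. Qed.

Ltac pcell_destruct p := let f := fresh "f" in let g := fresh "g" in
  let x := fresh "x" in destruct (pcell_cases p) as [->|[f [g [x ->]]]].

(* The 2-category laws on packed cells.  Whiskering by identities and by
   composites holds strictly, since packing forgets the coherence transports. *)
Lemma plwhisk_id1 {C : TwoCat} {a b : C} (p : PCell a b) : plwhisk (id1 b) p = p.
Proof.
  pcell_destruct p; [reflexivity|].
  rewrite <- pack_lwhisk, lwhisk_id1; apply pack_cast2.
Qed.
Lemma plwhisk_comp1 {C : TwoCat} {a b c d : C} (k : Hom c d) (h : Hom b c)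
  (p : PCell a b) : plwhisk (comp1 k h) p = plwhisk k (plwhisk h p).
Proof.
  pcell_destruct p; [reflexivity|].
  rewrite <- !pack_lwhisk, lwhisk_comp1; apply pack_cast2.
Qed.
Lemma prwhisk_comp1 {C : TwoCat} {a b c d : C} (p : PCell c d) (h : Hom b c)
  (k : Hom a b) : prwhisk p (comp1 h k) = prwhisk (prwhisk p h) k.
Proof.
  pcell_destruct p; [reflexivity|].
  rewrite <- !pack_rwhisk, rwhisk_comp1; apply pack_cast2.
Qed.
Lemma plrwhisk {C : TwoCat} {a b c d : C} (h : Hom c d) (p : PCell b c)
  (k : Hom a b) : plwhisk h (prwhisk p k) = prwhisk (plwhisk h p) k.
Proof.
  pcell_destruct p; [reflexivity|].
  rewrite <- !pack_rwhisk, <- !pack_lwhisk, lrwhisk; apply pack_cast2.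
Qed.
Lemma plwhisk_id2 {C : TwoCat} {a b c : C} (h : Hom b c) (f : Hom a b) :
  plwhisk h (pid2 f) = pid2 (comp1 h f).
Proof. unfold pid2. rewrite <- pack_lwhisk, lwhisk_id2. reflexivity. Qed.
Lemma plwhisk_eq {C : TwoCat} {a b c : C} (h h' : Hom b c) (p : PCell a b) :
  h = h' -> plwhisk h p = plwhisk h' p.
Proof. intros ->; reflexivity. Qed.

Lemma pvcompA {C : TwoCat} {a b : C} {f g h k : Hom a b} (p q r : PCell a b) :
  Typed p h k -> Typed q g h -> Typed r f g ->
  pvcomp p (pvcomp q r) = pvcomp (pvcomp p q) r.
Proof.
  intros Hp Hq Hr; unpack_typed Hp; unpack_typed Hq; unpack_typed Hr.
  rewrite <- !pack_vcomp, vcompA. reflexivity.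
Qed.
Lemma plwhisk_vcomp {C : TwoCat} {a b c : C} {f g k : Hom a b} (h : Hom b c)
  (p q : PCell a b) :
  Typed p g k -> Typed q f g ->
  plwhisk h (pvcomp p q) = pvcomp (plwhisk h p) (plwhisk h q).
Proof.
  intros Hp Hq; unpack_typed Hp; unpack_typed Hq.
  rewrite <- !pack_vcomp, <- !pack_lwhisk, <- pack_vcomp, lwhisk_vcomp. reflexivity.
Qed.
Lemma prwhisk_vcomp {C : TwoCat} {a b c : C} {f g k : Hom b c} (p q : PCell b c)
  (h : Hom a b) :
  Typed p g k -> Typed q f g ->
  prwhisk (pvcomp p q) h = pvcomp (prwhisk p h) (prwhisk q h).
Proof.
  intros Hp Hq; unpack_typed Hp; unpack_typed Hq.
  rewrite <- !pack_vcomp, <- !pack_rwhisk, <- pack_vcomp, rwhisk_vcomp. reflexivity.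
Qed.
Lemma pinterchange {C : TwoCat} {a b c : C} {f g : Hom a b} {h k : Hom b c}
  (x : PCell a b) (y : PCell b c) :
  Typed x f g -> Typed y h k ->
  pvcomp (plwhisk k x) (prwhisk y f) = pvcomp (prwhisk y g) (plwhisk h x).
Proof.
  intros Hx Hy; unpack_typed Hx; unpack_typed Hy.
  rewrite <- !pack_lwhisk, <- !pack_rwhisk, <- !pack_vcomp, interchange. reflexivity.
Qed.

Lemma pop_eq {C : TwoCat} {X0 X Z : C} {I S : Hom X0 X} {P Q : Hom X0 Z}
  (op : Op I S P Q) (O : C) (A B A' B' : Hom O X0) (p : PCell O X) :
  A = A' -> B = B' -> pop op O A B p = pop op O A' B' p.
Proof. intros -> ->; reflexivity. Qed.

Section PackedNaturality.
Context {C : TwoCat} {X0 X Z : C} {I S : Hom X0 X} {P Q : Hom X0 Z}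
  (op : Op I S P Q) (N : op_natural op).

Lemma pop_nat_obj (O O' : C) (W : Hom O' O) (A B : Hom O X0) (p : PCell O X) :
  Typed p (comp1 I A) (comp1 S B) ->
  pop op O' (comp1 A W) (comp1 B W) (prwhisk p W) = prwhisk (pop op O A B p) W.
Proof.
  intros H; unpack_typed H. destruct N as [NW _].
  rewrite <- pack_rwhisk,
    <- (pack_castc (eq_sym (comp1A I A W)) (eq_sym (comp1A S B W))).
  rewrite <- !pack_op, NW, pack_castc. reflexivity.
Qed.

Lemma pop_nat_src (O : C) (A A' B : Hom O X0) (q : PCell O X0) (r : PCell O X) :
  Typed r (comp1 I A) (comp1 S B) -> Typed q A' A ->
  pop op O A' B (pvcomp r (plwhisk I q)) = pvcomp (pop op O A B r) (plwhisk P q).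
Proof.
  intros Hr Hq; unpack_typed Hr; unpack_typed Hq. destruct N as [_ [NA _]].
  rewrite <- !pack_lwhisk, <- pack_vcomp, <- !pack_op, NA, <- pack_vcomp.
  reflexivity.
Qed.

Lemma pop_nat_tgt (O : C) (A B B' : Hom O X0) (q : PCell O X0) (r : PCell O X) :
  Typed r (comp1 I A) (comp1 S B) -> Typed q B B' ->
  pop op O A B' (pvcomp (plwhisk S q) r) = pvcomp (plwhisk Q q) (pop op O A B r).
Proof.
  intros Hr Hq; unpack_typed Hr; unpack_typed Hq. destruct N as [_ [_ NB]].
  rewrite <- !pack_lwhisk, <- pack_vcomp, <- !pack_op, NB, <- pack_vcomp.
  reflexivity.
Qed.

End PackedNaturality.

Section PackedRelMonad.
Context {C : TwoCat} (T : RelMonad C).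

Lemma pext_unit (O : C) (A B : Hom O (rm_X0 T)) (p : PCell O (rm_X T)) :
  Typed p (comp1 (rm_I T) A) (comp1 (rm_S T) B) ->
  pvcomp (pop (rm_ext T) O A B p) (prwhisk (pack (rm_unit T)) A) = p.
Proof.
  intros H; unpack_typed H.
  rewrite <- pack_rwhisk, <- pack_op, <- pack_vcomp, rm_ext_unit. reflexivity.
Qed.

Lemma punit_ext (O : C) (A : Hom O (rm_X0 T)) :
  pop (rm_ext T) O A A (prwhisk (pack (rm_unit T)) A) = pid2 (comp1 (rm_S T) A).
Proof. rewrite <- pack_rwhisk, <- pack_op, rm_unit_ext. reflexivity. Qed.

Lemma pext_comp (O : C) (A B D : Hom O (rm_X0 T)) (p q : PCell O (rm_X T)) :
  Typed p (comp1 (rm_I T) A) (comp1 (rm_S T) B) ->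
  Typed q (comp1 (rm_I T) B) (comp1 (rm_S T) D) ->
  pop (rm_ext T) O A D (pvcomp (pop (rm_ext T) O B D q) p)
  = pvcomp (pop (rm_ext T) O B D q) (pop (rm_ext T) O A B p).
Proof.
  intros Hp Hq; unpack_typed Hp; unpack_typed Hq.
  rewrite <- !pack_op, <- !pack_vcomp, <- pack_op, rm_ext_comp. reflexivity.
Qed.

Lemma pmod_unit {K : C} (M : Hom (rm_X0 T) K) op (H : is_rmod T M op)
  (O : C) (A : Hom O (rm_X0 T)) :
  pop op O A A (prwhisk (pack (rm_unit T)) A) = pid2 (comp1 M A).
Proof. destruct H as [_ [H _]]. rewrite <- pack_rwhisk, <- pack_op, H. reflexivity. Qed.

Lemma pmod_comp {K : C} (M : Hom (rm_X0 T) K) op (H : is_rmod T M op)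
  (O : C) (A B D : Hom O (rm_X0 T)) (p q : PCell O (rm_X T)) :
  Typed p (comp1 (rm_I T) A) (comp1 (rm_S T) B) ->
  Typed q (comp1 (rm_I T) B) (comp1 (rm_S T) D) ->
  pop op O A D (pvcomp (pop (rm_ext T) O B D q) p)
  = pvcomp (pop op O B D q) (pop op O A B p).
Proof.
  destruct H as [_ [_ H]]. intros Hp Hq; unpack_typed Hp; unpack_typed Hq.
  rewrite <- !pack_op, <- !pack_vcomp, <- pack_op, H. reflexivity.
Qed.

Lemma pmodmor {K : C} {M N : Hom (rm_X0 T) K} m n (g : Cell M N) :
  is_modmor T m n g ->
  forall (O : C) (A B : Hom O (rm_X0 T)) (p : PCell O (rm_X T)),
  Typed p (comp1 (rm_I T) A) (comp1 (rm_S T) B) ->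
  pvcomp (prwhisk (pack g) B) (pop m O A B p)
  = pvcomp (pop n O A B p) (prwhisk (pack g) A).
Proof.
  intros H O A B p Hp; unpack_typed Hp.
  rewrite <- !pack_op, <- !pack_rwhisk, <- !pack_vcomp, H. reflexivity.
Qed.

End PackedRelMonad.

Ltac pnorm := repeat (rewrite ?pack_castc, ?pack_cast2, ?pack_vcomp,
  ?pack_lwhisk, ?pack_rwhisk, ?pack_id2, ?(pack_op (rm_ext _)),
  ?(pack_op (md_op _)), ?(pack_op (lift_Ft _ _))).
Ltac pnorm_in H := repeat (rewrite ?pack_castc, ?pack_cast2, ?pack_vcomp,
  ?pack_lwhisk, ?pack_rwhisk, ?pack_id2, ?(pack_op (rm_ext _)),
  ?(pack_op (md_op _)), ?(pack_op (lift_Ft _ _)) in H).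

Lemma U_is_rmod {C : TwoCat} (T : RelMonad C) {K : C} (M : Hom (rm_X T) K) :
  is_rmod T (comp1 M (rm_S T)) (U_op T M).
Proof.
  assert (N := rm_ext_nat _ T).
  unfold U_op. split; [split; [|split]|split].
  - intros O O' W A B k. apply pack_inj. pnorm.
    erewrite (pop_nat_obj _ N) by typed. apply plrwhisk.
  - intros O A A' B al k. apply pack_inj. pnorm.
    erewrite (pop_nat_src _ N), plwhisk_vcomp, plwhisk_comp1 by typed. reflexivity.
  - intros O A B B' be k. apply pack_inj. pnorm.
    erewrite (pop_nat_tgt _ N), plwhisk_vcomp, plwhisk_comp1 by typed. reflexivity.
  - intros O A. apply pack_inj. pnorm.
    rewrite punit_ext, plwhisk_id2. f_equal; apply comp1A.
  - intros O A B D h k. apply pack_inj. pnorm.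
    erewrite pext_comp, plwhisk_vcomp by typed. reflexivity.
Qed.

Lemma pack_U_op {C : TwoCat} (T : RelMonad C) {K : C} (M : Hom (rm_X T) K)
  (O : C) (A B : Hom O (rm_X0 T)) (k : Cell (comp1 (rm_I T) A) (comp1 (rm_S T) B)) :
  pack (U_op T M O A B k) = plwhisk M (pop (rm_ext T) O A B (pack k)).
Proof. unfold U_op. pnorm. reflexivity. Qed.

Definition U_id {C : TwoCat} (T : RelMonad C) : RMod T (rm_X T) :=
  MkRMod T (comp1 (id1 (rm_X T)) (rm_S T)) (U_op T (id1 (rm_X T)))
         (U_is_rmod T (id1 _)).

Lemma LiftData_ext {C : TwoCat} {S T : RelMonad C}
  {F : Hom (rm_X S) (rm_X T)} {F0 : Hom (rm_X0 S) (rm_X0 T)}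
  (d d' : LiftData S T F F0) :
  (forall (K : C) (m : RMod T K) (O : C) (A B : Hom O (rm_X0 S))
     (f : Cell (comp1 (rm_I S) A) (comp1 (rm_S S) B)),
     lift_Ft d m O A B f = lift_Ft d' m O A B f) ->
  (forall (K : C) (M : Hom (rm_X T) K), lift_phi d M = lift_phi d' M) ->
  d = d'.
Proof.
  destruct d as [Ft ph], d' as [Ft' ph']; cbn [lift_Ft lift_phi]. intros HFt Hph.
  f_equal.
  - do 6 (apply functional_extensionality_dep; intro). apply HFt.
  - do 2 (apply functional_extensionality_dep; intro). apply Hph.
Qed.

Section Correspondence.
Context {C : TwoCat} {S T : RelMonad C}
  {F : Hom (rm_X S) (rm_X T)} {F0 : Hom (rm_X0 S) (rm_X0 T)}
  (e : comp1 F (rm_I S) = comp1 (rm_I T) F0).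

Lemma pmor_unit (phi : Cell (comp1 F (rm_S S)) (comp1 (rm_S T) F0)) :
  is_rmon_mor e phi ->
  pvcomp (pack phi) (plwhisk F (pack (rm_unit S))) = prwhisk (pack (rm_unit T)) F0.
Proof. intros [H _]. apply (f_equal pack) in H. pnorm_in H. exact H. Qed.

Lemma pmor_ext (phi : Cell (comp1 F (rm_S S)) (comp1 (rm_S T) F0)) :
  is_rmon_mor e phi ->
  forall (O : C) (A B : Hom O (rm_X0 S)) (p : PCell O (rm_X S)),
  Typed p (comp1 (rm_I S) A) (comp1 (rm_S S) B) ->
  pvcomp (prwhisk (pack phi) B) (plwhisk F (pop (rm_ext S) O A B p))
  = pvcomp (pop (rm_ext T) O (comp1 F0 A) (comp1 F0 B)
              (pvcomp (prwhisk (pack phi) B) (plwhisk F p)))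
           (prwhisk (pack phi) A).
Proof.
  intros [_ H] O A B p Hp; unpack_typed Hp. specialize (H O A B x).
  apply (f_equal pack) in H. unfold transfer in H. pnorm_in H. exact H.
Qed.

Lemma transfer_is_rmod (phi : Cell (comp1 F (rm_S S)) (comp1 (rm_S T) F0)) :
  is_rmon_mor e phi -> forall (K : C) (m : RMod T K),
  is_rmod S (comp1 (md_car m) F0) (lift_Ft (phi_to_lifting e phi) m).
Proof.
  intros Hm K m. assert (M1 := pmor_unit phi Hm). assert (M2 := pmor_ext phi Hm).
  assert (Hop := md_ax _ _ m). assert (N := proj1 Hop).
  cbn [phi_to_lifting lift_Ft]; unfold transfer.
  split; [split; [|split]|split].
  - intros O O' W A B k. apply pack_inj. pnorm.
    rewrite (pop_eq _ _ _ _ (comp1 (comp1 F0 A) W) (comp1 (comp1 F0 B) W))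
      by apply comp1A.
    erewrite prwhisk_comp1, plrwhisk, <- prwhisk_vcomp by typed.
    erewrite (pop_nat_obj _ N) by typed. reflexivity.
  - intros O A A' B al k. apply pack_inj. pnorm.
    erewrite plwhisk_vcomp by typed.
    rewrite <- plwhisk_comp1, (plwhisk_eq _ _ (pack al) e).
    rewrite (plwhisk_comp1 (rm_I T) F0), (plwhisk_comp1 (md_car m) F0).
    erewrite pvcompA, (pop_nat_src _ N) by typed. reflexivity.
  - intros O A B B' be k. apply pack_inj. pnorm.
    erewrite plwhisk_vcomp, <- plwhisk_comp1, pvcompA by typed.
    erewrite <- pinterchange, <- pvcompA by typed.
    rewrite (plwhisk_comp1 (rm_S T) F0), (plwhisk_comp1 (md_car m) F0).
    erewrite (pop_nat_tgt _ N) by typed. reflexivity.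
  - intros O A. apply pack_inj. pnorm.
    erewrite plrwhisk, <- prwhisk_vcomp by typed.
    rewrite M1, <- prwhisk_comp1, (pmod_unit _ _ _ Hop). f_equal; apply comp1A.
  - intros O A B D h k. apply pack_inj. pnorm.
    erewrite plwhisk_vcomp, pvcompA, M2, <- pvcompA by typed.
    erewrite (pmod_comp _ _ _ Hop) by typed. reflexivity.
Qed.

Lemma phi_to_lifting_is_lifting (phi : Cell (comp1 F (rm_S S)) (comp1 (rm_S T) F0)) :
  is_rmon_mor e phi -> is_lifting e (phi_to_lifting e phi).
Proof.
  intros Hm. assert (M1 := pmor_unit phi Hm). assert (M2 := pmor_ext phi Hm).
  split; [exact (transfer_is_rmod phi Hm)|].
  unfold phi_to_lifting; cbn [lift_Ft lift_phi]; unfold transfer.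
  split; [|split; [|split; [|split; [|split; [|split]]]]].
  - intros K m n g Hg O A B k. apply pack_inj. pnorm.
    erewrite <- !prwhisk_comp1, (pmodmor _ _ _ _ Hg) by typed. reflexivity.
  - intros K K' L m pf O A B f. apply pack_inj. cbn [md_op]. unfold post_op.
    pnorm. reflexivity.
  - intros K M pf O A B k. apply pack_inj. cbn [md_op]. unfold U_op. pnorm.
    erewrite plwhisk_comp1, <- !plrwhisk, <- !plwhisk_vcomp, M2 by typed.
    reflexivity.
  - intros K M M' mu. apply pack_inj. pnorm.
    rewrite <- !prwhisk_comp1. apply pinterchange; typed.
  - intros K K' L M. apply pack_inj. pnorm. apply plwhisk_comp1.
  - intros K M. apply pack_inj. pnorm.
    erewrite plwhisk_comp1, <- plwhisk_vcomp, M1 by typed. apply plrwhisk.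
  - intros K m pf O A B f. apply pack_inj. cbn [md_op]. unfold U_op. pnorm.
    erewrite plwhisk_id1, pext_unit by typed. reflexivity.
Qed.

Lemma plifting_unit (d : LiftData S T F F0) :
  is_lifting e d ->
  pvcomp (pack (lift_phi d (id1 (rm_X T)))) (plwhisk F (pack (rm_unit S)))
  = prwhisk (pack (rm_unit T)) F0.
Proof.
  intros [_ [_ [_ [_ [_ [_ [Hunit _]]]]]]].
  specialize (Hunit _ (id1 (rm_X T))). apply (f_equal pack) in Hunit.
  pnorm_in Hunit. rewrite plwhisk_comp1, !plwhisk_id1 in Hunit. exact Hunit.
Qed.

Lemma plifting_modmor (d : LiftData S T F F0) :
  is_lifting e d -> forall (O : C) (A B : Hom O (rm_X0 S))
    (k : Cell (comp1 (rm_I S) A) (comp1 (rm_S S) B)),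
  pvcomp (prwhisk (pack (lift_phi d (id1 (rm_X T)))) B)
         (plwhisk F (pop (rm_ext S) O A B (pack k)))
  = pvcomp (pop (lift_Ft d (U_id T)) O A B (pack k))
           (prwhisk (pack (lift_phi d (id1 (rm_X T)))) A).
Proof.
  intros [_ [_ [_ [Hmor _]]]] O A B k.
  specialize (Hmor _ (id1 (rm_X T)) (U_is_rmod T _) O A B k).
  apply (f_equal pack) in Hmor. pnorm_in Hmor.
  rewrite pack_U_op, plwhisk_comp1, plwhisk_id1 in Hmor. exact Hmor.
Qed.

Lemma lifting_unit_square (d : LiftData S T F F0) :
  is_lifting e d -> forall (O : C) (A B : Hom O (rm_X0 S)) (p : PCell O (rm_X S)),
  Typed p (comp1 (rm_I S) A) (comp1 (rm_S S) B) ->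
  pvcomp (pop (lift_Ft d (U_id T)) O A B p) (prwhisk (pack (rm_unit T)) (comp1 F0 A))
  = pvcomp (prwhisk (pack (lift_phi d (id1 (rm_X T)))) B) (plwhisk F p).
Proof.
  intros Hl O A B p Hp.
  erewrite prwhisk_comp1, <- (plifting_unit d Hl), prwhisk_vcomp, pvcompA by typed.
  unpack_typed Hp. rewrite <- (plifting_modmor d Hl).
  erewrite <- pvcompA, <- plrwhisk, <- (plwhisk_vcomp F), pext_unit by typed.
  reflexivity.
Qed.

(* Hence, by condition (2) applied to U_id, the operator of Ft(U_id) is
   f |-> (phi B . F f)^dagger. *)
Lemma lifting_op_U_id (d : LiftData S T F F0) :
  is_lifting e d -> forall (O : C) (A B : Hom O (rm_X0 S)) (p : PCell O (rm_X S)),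
  Typed p (comp1 (rm_I S) A) (comp1 (rm_S S) B) ->
  pop (lift_Ft d (U_id T)) O A B p
  = pop (rm_ext T) O (comp1 F0 A) (comp1 F0 B)
      (pvcomp (prwhisk (pack (lift_phi d (id1 (rm_X T)))) B) (plwhisk F p)).
Proof.
  intros Hl O A B p Hp. erewrite <- (lifting_unit_square d Hl O A B p) by typed.
  destruct Hl as [_ [_ [_ [_ [_ [_ [_ Hcond2]]]]]]].
  unpack_typed Hp. specialize (Hcond2 _ (U_id T) (U_is_rmod T _) O A B x).
  unfold U_id in Hcond2; cbn [md_car md_op] in Hcond2; fold (U_id T) in Hcond2.
  apply (f_equal pack) in Hcond2.
  rewrite pack_castc, pack_U_op, plwhisk_id1 in Hcond2. pnorm_in Hcond2.
  rewrite <- !pack_op. exact Hcond2.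
Qed.

Lemma lifting_to_phi_is_mor (d : LiftData S T F F0) :
  is_lifting e d -> is_rmon_mor e (lifting_to_phi d).
Proof.
  intros Hl. unfold lifting_to_phi. split.
  - apply pack_inj. pnorm. exact (plifting_unit d Hl).
  - intros O A B k. apply pack_inj. unfold transfer. pnorm.
    rewrite (plifting_modmor d Hl). f_equal.
    apply (lifting_op_U_id d Hl); typed.
Qed.

(* A lifting is recovered from its component at 1_Y.  Its operators, by
   condition (2) and the square above: *)
Lemma lifting_Ft_recovered (d : LiftData S T F F0) :
  is_lifting e d -> forall (K : C) (m : RMod T K) (O : C) (A B : Hom O (rm_X0 S))
    (f : Cell (comp1 (rm_I S) A) (comp1 (rm_S S) B)),
  lift_Ft (phi_to_lifting e (lifting_to_phi d)) m O A B f = lift_Ft d m O A B f.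
Proof.
  intros Hl K m O A B f. assert (Hl' := Hl).
  destruct Hl' as [_ [_ [_ [_ [_ [_ [_ Hcond2]]]]]]].
  apply pack_inj. rewrite (Hcond2 K m (U_is_rmod T _) O A B f).
  cbn [phi_to_lifting lift_Ft]. unfold transfer, lifting_to_phi. pnorm.
  f_equal. symmetry. fold (U_id T). rewrite (pack_op (lift_Ft d (U_id T))).
  apply (lifting_unit_square d Hl); typed.
Qed.

(* and its components, by the modification axiom at M = M 1_Y. *)
Lemma lifting_phi_recovered (d : LiftData S T F F0) :
  is_lifting e d -> forall (K : C) (M : Hom (rm_X T) K),
  lift_phi (phi_to_lifting e (lifting_to_phi d)) M = lift_phi d M.
Proof.
  intros [_ [_ [_ [_ [_ [Hmodif _]]]]]] K M.
  apply pack_inj. cbn [phi_to_lifting lift_phi]. unfold lifting_to_phi. pnorm.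
  transitivity (pack (lift_phi d (comp1 M (id1 (rm_X T))))).
  - rewrite Hmodif. pnorm. reflexivity.
  - rewrite (comp1_idr M). reflexivity.
Qed.

Lemma lifting_roundtrip (d : LiftData S T F F0) :
  is_lifting e d -> phi_to_lifting e (lifting_to_phi d) = d.
Proof.
  intros Hl. apply LiftData_ext.
  - exact (lifting_Ft_recovered d Hl).
  - exact (lifting_phi_recovered d Hl).
Qed.

Lemma morphism_roundtrip (phi : Cell (comp1 F (rm_S S)) (comp1 (rm_S T) F0)) :
  lifting_to_phi (phi_to_lifting e phi) = phi.
Proof.
  apply pack_inj. unfold lifting_to_phi, phi_to_lifting. cbn [lift_phi]. pnorm.
  apply plwhisk_id1.
Qed.

End Correspondence.

Theorem mainTheorem15 (C : TwoCat) (S T : RelMonad C)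
  (F : Hom (rm_X S) (rm_X T)) (F0 : Hom (rm_X0 S) (rm_X0 T))
  (e : comp1 F (rm_I S) = comp1 (rm_I T) F0) :
  exists (Phi : Lifting e -> RMonMor e) (Psi : RMonMor e -> Lifting e),
    (forall l : Lifting e, Psi (Phi l) = l) /\
    (forall p : RMonMor e, Phi (Psi p) = p) /\
    (forall l : Lifting e, proj1_sig (Phi l) = lifting_to_phi (proj1_sig l)) /\
    (forall p : RMonMor e, proj1_sig (Psi p) = phi_to_lifting e (proj1_sig p)).
Proof.
  exists (fun l => exist _ (lifting_to_phi (proj1_sig l))
                     (lifting_to_phi_is_mor e _ (proj2_sig l))).
  exists (fun p => exist _ (phi_to_lifting e (proj1_sig p))
                     (phi_to_lifting_is_lifting e _ (proj2_sig p))).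
  split; [|split; [|split]].
  - intros [d Hd]. apply eq_sig_hprop; [intros; apply proof_irrelevance|].
    exact (lifting_roundtrip e d Hd).
  - intros [phi Hphi]. apply eq_sig_hprop; [intros; apply proof_irrelevance|].
    exact (morphism_roundtrip e phi).
  - reflexivity.
  - reflexivity.
Qed.
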